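(* Let $S$ be a non-empty poset and $\mathcal{L}=(L,\wedge,\vee,0,1)$ a bounded lattice with an $S$-action $\rightharpoonup$. Define $s\rightharpoonup^* x=(s\rightharpoonup 1)\wedge x$ for $s\in S$, $x\in L$. Then $((\mathcal{L},\rightharpoonup)^0)^0=(\mathcal{L},\rightharpoonup^* )$.
   Context: An $S$-action on a lattice $(L,\wedge,\vee)$ is a map $\rightharpoonup:S\times L\to L$ such that $s_1\leq s_2\Rightarrow s_1\rightharpoonup x\leq s_2\rightharpoonup x$; $x\leq y\Rightarrow s\rightharpoonup x\leq s\rightharpoonup y$; and $s\rightharpoonup x\leq x$. For a bounded lattice $(L,\wedge,\vee,0,1)$ with $S$-action $\rightharpoonup$, its dual $(\mathcal{L},\rightharpoonup)^0$ is the bounded lattice $(L,\vee,\wedge,1,0)$ (order reversed) with the action of the dual poset $S^0=(S,\geq)$ given by $s\rightharpoonup^0 x=(s\rightharpoonup 1)\vee x$ (here $1$ is the top of the original lattice). The double dual is formed by applying this construction twice (so its poset is $(S^0)^0=S$). *)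

From HB Require Import structures.
From mathcomp Require Import all_boot all_order.
Set Implicit Arguments. Unset Strict Implicit. Unset Printing Implicit Defensive.
Import Order.Theory.
Local Open Scope order_scope.

Definition is_S_action {dS dL} (S : porderType dS) (L : latticeType dL)
  (act : S -> L -> L) : Prop :=
  [/\ (forall (s1 s2 : S) (x : L), s1 <= s2 -> act s1 x <= act s2 x),
      (forall (s : S) (x y : L), x <= y -> act s x <= act s y) &
      (forall (s : S) (x : L), act s x <= x)].

(* The dual of (L, act): the bounded lattice L^d (order reversed, meet and
   join swapped, top and bottom swapped), with the action of the dual poset
   S^d given by  s ->^0 x = (s -> 1) \/ x  (1 the top, \/ the join of L). *)
Definition dual_act {dS dL} {S : porderType dS} {L : tbLatticeType dL}
  (act : S -> L -> L) : S^d -> L^d -> L^d :=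
  fun s x => ((act s \top) `|` x : L).

Definition star_act {dS dL} {S : porderType dS} {L : tbLatticeType dL}
  (act : S -> L -> L) : S -> L -> L :=
  fun s x => (act s \top) `&` x.

From HB Require Import structures.
From mathcomp Require Import all_boot all_order.
Import Order.Theory.
Local Open Scope order_scope.

(* Dualising twice gives back the order, lattice operations and poset of L
   and S by conversion; for the action, the top of L^d is the bottom of L, so
   (s ->^0 1^0) = (s -> 1) \/ 0 = s -> 1, and the join of L^d is the meet of L. *)

Lemma dual_act_dualK {dS dL} {S : porderType dS} {L : tbLatticeType dL}
    (act : S -> L -> L) (s : S) (x : L) :
  (dual_act (dual_act act) (s : (S^d)^d) (x : (L^d)^d) : L) = star_act act s x.
Proof. by rewrite /dual_act /star_act /= joinx0. Qed.

Theorem mainTheorem8 (dS dL : Order.disp_t) (S : porderType dS)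
  (L : tbLatticeType dL) (act : S -> L -> L)
  (s0 : S) (Hact : is_S_action act) :
  [/\ (forall x y : L, ((x : (L^d)^d) <= (y : (L^d)^d)) = (x <= y)),
      (forall x y : L, ((x : (L^d)^d) `&` (y : (L^d)^d) : L) = x `&` y
                    /\ ((x : (L^d)^d) `|` (y : (L^d)^d) : L) = x `|` y),
      (((\bot : (L^d)^d) : L) = \bot /\ ((\top : (L^d)^d) : L) = \top),
      (forall s t : S, ((s : (S^d)^d) <= (t : (S^d)^d)) = (s <= t)) &
      (forall (s : S) (x : L),
          (dual_act (dual_act act) (s : (S^d)^d) (x : (L^d)^d) : L)
          = star_act act s x)].
Proof. by split=> //; exact: dual_act_dualK. Qed.
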